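(* A cancellative category $\mathcal C$ admits conditional weak left-lcms if and only if $\mathcal C$ is a strong Garside family in itself.
   Context: A category is cancellative if $fg=fg'\Rightarrow g=g'$ and $gf=g'f\Rightarrow g=g'$. $f\preccurlyeq g$ means $g=fg'$ for some $g'$. Two elements $f,g$ with the same source are left-disjoint if whenever $h\preccurlyeq h'f$ and $h\preccurlyeq h'g$, then $h\preccurlyeq h'$. An element $h$ is a weak left-lcm of $f,g$ (same target) if $h$ is a common left-multiple of $f$ and $g$ and every common left-multiple of $f$ and $g$ that admits a common left-multiple with $h$ is a left-multiple of $h$. $\mathcal C$ admits conditional weak left-lcms if, whenever $f,g$ admit a common left-multiple $h_0$, they admit a weak left-lcm $h$ such that $h_0$ is a left-multiple of $h$. $\mathcal C$ is a strong Garside family in itself if for all $f,g,s,t\in\mathcal C$ with $fs=gt$ there exist $f',g',h\in\mathcal C$ such that $f'$ and $g'$ are left-disjoint, $f's=g't$, $f=hf'$ and $g=hg'$. *)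

(* Composition is written in diagrammatic order, as in the paper:
   for f : x -> y and g : y -> z, comp f g : x -> z is "fg". *)
Set Implicit Arguments.

Record Category := {
  Ob : Type;
  Hom : Ob -> Ob -> Type;
  idm : forall x, Hom x x;
  comp : forall x y z, Hom x y -> Hom y z -> Hom x z;
  comp_assoc : forall x y z w (f : Hom x y) (g : Hom y z) (h : Hom z w),
      comp (comp f g) h = comp f (comp g h);
  comp_id_l : forall x y (f : Hom x y), comp (idm x) f = f;
  comp_id_r : forall x y (f : Hom x y), comp f (idm y) = f
}.

Arguments comp {c x y z} _ _.
Arguments idm {c} x.

Section Defs.
Variable C : Category.

Definition cancellative : Prop :=
  (forall x y z (f : Hom C x y) (g g' : Hom C y z), comp f g = comp f g' -> g = g') /\
  (forall x y z (f : Hom C y z) (g g' : Hom C x y), comp g f = comp g' f -> g = g').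

Definition left_div {x y z} (f : Hom C x y) (g : Hom C x z) : Prop :=
  exists g' : Hom C y z, g = comp f g'.

Definition left_disjoint {x y y'} (f : Hom C x y) (g : Hom C x y') : Prop :=
  forall w v (h : Hom C w v) (h' : Hom C w x),
    left_div h (comp h' f) -> left_div h (comp h' g) -> left_div h h'.

Definition left_mult {w x z} (h : Hom C w z) (f : Hom C x z) : Prop :=
  exists f' : Hom C w x, h = comp f' f.

Definition common_left_mult {w x y z} (h : Hom C w z) (f : Hom C x z) (g : Hom C y z) : Prop :=
  left_mult h f /\ left_mult h g.

Definition have_common_left_mult {w1 w z} (h1 : Hom C w1 z) (h : Hom C w z) : Prop :=
  exists w2 (a : Hom C w2 w1) (b : Hom C w2 w), comp a h1 = comp b h.

Definition weak_left_lcm {w x y z} (h : Hom C w z) (f : Hom C x z) (g : Hom C y z) : Prop :=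
  common_left_mult h f g /\
  forall w1 (h1 : Hom C w1 z),
    common_left_mult h1 f g -> have_common_left_mult h1 h -> left_mult h1 h.

Definition admits_conditional_weak_left_lcms : Prop :=
  forall x y z (f : Hom C x z) (g : Hom C y z) w0 (h0 : Hom C w0 z),
    common_left_mult h0 f g ->
    exists w (h : Hom C w z), weak_left_lcm h f g /\ left_mult h0 h.

Definition strong_Garside_in_itself : Prop :=
  forall x y y' z (f : Hom C x y) (g : Hom C x y') (s : Hom C y z) (t : Hom C y' z),
    comp f s = comp g t ->
    exists w (f' : Hom C w y) (g' : Hom C w y') (h : Hom C x w),
      left_disjoint f' g' /\ comp f' s = comp g' t /\ f = comp h f' /\ g = comp h g'.

End Defs.

(* A common left-multiple [f' s = g' t] of [s] and [t] is a weak left-lcm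
   exactly when [f'] and [g'] are left-disjoint (by cancellativity).  Given
   [f s = g t], the conditional weak left-lcm of [s] and [t] below [f s]
   therefore yields the left-disjoint decomposition required of a strong
   Garside family; conversely, the decomposition of a common left-multiple
   [a f = b g] provides the weak left-lcm. *)

Section CancellativeCategory.
Variable C : Category.
Hypothesis comp_cancel_l : forall {x y z} (f : Hom C x y) (g g' : Hom C y z),
  comp f g = comp f g' -> g = g'.
Hypothesis comp_cancel_r : forall {x y z} (f : Hom C y z) (g g' : Hom C x y),
  comp g f = comp g' f -> g = g'.

Lemma weak_left_lcm_left_disjoint {w y y' z} {f' : Hom C w y} {g' : Hom C w y'}
    {s : Hom C y z} {t : Hom C y' z} :
  comp f' s = comp g' t -> weak_left_lcm C (comp f' s) s t ->
  left_disjoint C f' g'.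
Proof.
  intros Hfs [_ Hlcm] w1 v h1 h2 [a Ha] [b Hb].
  assert (Hh2 : comp h2 (comp f' s) = comp h1 (comp a s)).
  { rewrite <- comp_assoc, Ha, comp_assoc. reflexivity. }
  assert (Has : comp a s = comp b t).
  { apply (comp_cancel_l h1).
    rewrite <- Hh2, Hfs, <- !comp_assoc, <- Hb. reflexivity. }
  destruct (Hlcm v (comp a s)) as [c Hc].
  - split; [exists a | exists b]; auto.
  - exists w1, h1, h2. symmetry; exact Hh2.
  - exists c. apply (comp_cancel_r (comp f' s)).
    rewrite Hh2, comp_assoc, <- Hc. reflexivity.
Qed.

Lemma left_disjoint_weak_left_lcm {w y y' z} {f' : Hom C w y} {g' : Hom C w y'}
    {s : Hom C y z} {t : Hom C y' z} :
  left_disjoint C f' g' -> comp f' s = comp g' t ->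
  weak_left_lcm C (comp f' s) s t.
Proof.
  intros Hdisj Hfs. split.
  - split; [exists f' | exists g']; auto.
  - intros w1 h1 [[c Hc] [d Hd]] [w2 [p [q Hpq]]].
    assert (Hpc : comp p c = comp q f').
    { apply (comp_cancel_r s). rewrite !comp_assoc, <- Hc. exact Hpq. }
    assert (Hpd : comp p d = comp q g').
    { apply (comp_cancel_r t). rewrite !comp_assoc, <- Hd, <- Hfs. exact Hpq. }
    destruct (Hdisj _ _ p q) as [e He].
    + exists c. symmetry; exact Hpc.
    + exists d. symmetry; exact Hpd.
    + exists e. apply (comp_cancel_l p).
      rewrite Hpq, He, comp_assoc. reflexivity.
Qed.

Lemma conditional_weak_left_lcms_strong_Garside :
  admits_conditional_weak_left_lcms C -> strong_Garside_in_itself C.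
Proof.
  intros Hlcm x y y' z f g s t Hfs.
  destruct (Hlcm y y' z s t x (comp f s)) as [w [h [Hweak [k Hk]]]].
  { split; [exists f | exists g]; auto. }
  destruct (proj1 Hweak) as [[f' Hf'] [g' Hfg']]. subst h.
  exists w, f', g', k. repeat split.
  - exact (weak_left_lcm_left_disjoint Hfg' Hweak).
  - exact Hfg'.
  - apply (comp_cancel_r s). rewrite comp_assoc. exact Hk.
  - apply (comp_cancel_r t). rewrite comp_assoc, <- Hfg', <- Hk. symmetry; exact Hfs.
Qed.

Lemma strong_Garside_conditional_weak_left_lcms :
  strong_Garside_in_itself C -> admits_conditional_weak_left_lcms C.
Proof.
  intros HG x y z f g w0 h0 [[a Ha] [b Hb]].
  destruct (HG w0 x y z a b f g) as [w [f' [g' [k [Hdisj [Hfg' [Ha' _]]]]]]].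
  { congruence. }
  exists w, (comp f' f). split.
  - exact (left_disjoint_weak_left_lcm Hdisj Hfg').
  - exists k. rewrite Ha, Ha', comp_assoc. reflexivity.
Qed.

End CancellativeCategory.

Theorem mainTheorem5 (C : Category) (HC : cancellative C) :
  admits_conditional_weak_left_lcms C <-> strong_Garside_in_itself C.
Proof.
  destruct HC as [Hcancel_l Hcancel_r]. split.
  - exact (conditional_weak_left_lcms_strong_Garside C Hcancel_l Hcancel_r).
  - exact (strong_Garside_conditional_weak_left_lcms C Hcancel_l Hcancel_r).
Qed.
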